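(* For every ranking profile $R$ over $m\geq 2$ candidates, every ranking $\rhd$ chosen by the Chamberlin-Courant SWF satisfies unanimous justified representation (uJR) for $R$, i.e., $u(\succ,\rhd)\geq 1$ for every $\succ\in\mathcal{R}$ with $R(\succ)\geq 1/\binom{m}{2}$.
   Context: Let $C=\{x_1,\dots,x_m\}$ be a set of $m$ candidates. A ranking is a strict linear order over $C$; $\mathcal{R}$ denotes the set of all rankings over $C$. A ranking profile is a function $R:\mathcal{R}\to[0,1]$ with $\sum_{\succ\in\mathcal{R}}R(\succ)=1$. For rankings $\succ,\rhd$, $u(\succ,\rhd)=|\{(x,y)\in C^2: x\succ y \text{ and } x\rhd y\}|$. Let $s:\mathbb{N}_0\to\mathbb{R}$ with $s(0)=0$ and $s(k)=1$ for $k>0$. The Chamberlin-Courant SWF chooses a ranking $\rhd\in\mathcal{R}$ maximizing $\sum_{\succ\in\mathcal{R}}R(\succ)\,s(u(\succ,\rhd))$ (ties broken arbitrarily). *)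

From mathcomp Require Import all_boot all_order all_algebra all_fingroup.
From mathcomp Require Import reals.
Set Implicit Arguments. Unset Strict Implicit. Unset Printing Implicit Defensive.
Import Order.TTheory GRing.Theory Num.Theory.
Local Open Scope ring_scope.

(* A ranking (strict linear order on 'I_m) is encoded by a
   permutation [r : {perm 'I_m}] giving each candidate its position:
   x is ranked above y iff r x < r y.  This is a bijection between
   {perm 'I_m} and the set of strict linear orders on 'I_m. *)
Definition ranking (m : nat) := {perm 'I_m}.

Definition prefers (m : nat) (r : ranking m) (x y : 'I_m) : bool :=
  (val (r x) < val (r y))%N.

(* u(succ, rhd) = |{(x,y) : x succ y and x rhd y}| *)
Definition agree (m : nat) (r1 r2 : ranking m) : nat :=
  #|[set p : 'I_m * 'I_m | prefers r1 p.1 p.2 && prefers r2 p.1 p.2]|.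

Definition is_profile (R : realType) (m : nat) (P : {ffun ranking m -> R}) : Prop :=
  (forall r, 0 <= P r <= 1) /\ \sum_(r : ranking m) P r = 1.

Definition s_CC (R : realType) (k : nat) : R := if k == 0%N then 0 else 1.

Definition cc_score (R : realType) (m : nat) (P : {ffun ranking m -> R})
  (t : ranking m) : R :=
  \sum_(r : ranking m) P r * s_CC R (agree r t).

Definition cc_chosen (R : realType) (m : nat) (P : {ffun ranking m -> R})
  (t : ranking m) : Prop :=
  forall t' : ranking m, cc_score P t' <= cc_score P t.

Definition uJR (R : realType) (m : nat) (P : {ffun ranking m -> R})
  (t : ranking m) : Prop :=
  forall r : ranking m, (('C(m, 2))%:R)^-1 <= P r -> (1 <= agree r t)%N.

(* If the chosen ranking t agrees with r on no pair, t is the reversal of r,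
   and every other ranking agrees with t somewhere, so the score of t is
   1 - P r.  Since the reversal of any r' scores 1 - P r', optimality of t
   makes P r the minimal weight; hence m! * P r <= 1.  But P r >= 1/C(m,2)
   and C(m,2) < m! for m >= 2. *)

From mathcomp Require Import all_boot all_order all_algebra all_fingroup.
From mathcomp Require Import reals.
Import Order.TTheory GRing.Theory Num.Theory.
From mathcomp Require Import zify.

Set Implicit Arguments. Unset Strict Implicit. Unset Printing Implicit Defensive.

Lemma card_ord_lt m k : (k <= m)%N -> #|[set i : 'I_m | (i < k)%N]| = k.
Proof.
move=> le_km.
have -> : [set i : 'I_m | (i < k)%N] = widen_ord le_km @: [set: 'I_k].
  apply/setP=> i; rewrite inE; apply/idP/imsetP.
  - by move=> lt_ik; exists (Ordinal lt_ik); rewrite ?inE //; apply: val_inj.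
  - by case=> j _ ->; rewrite /= ltn_ord.
rewrite card_imset ?cardsT ?card_ord //.
by move=> a b /(congr1 val) /= /val_inj.
Qed.

Section Rankings.

Variable m : nat.
Implicit Types a b c : ranking m.

Lemma card_prefers_above a x : #|[set y | prefers a y x]| = val (a x).
Proof.
have -> : [set y | prefers a y x] = a @^-1: [set i : 'I_m | (i < a x)%N].
  by apply/setP=> y; rewrite !inE.
by rewrite card_preimset ?card_ord_lt 1?ltnW ?ltn_ord //; apply: perm_inj.
Qed.

Lemma agree0_prefersE a c x y :
  agree a c = 0%N -> x != y -> prefers a x y = prefers c y x.
Proof.
move=> /eqP; rewrite cards_eq0 => /eqP agree_set0 neq_xy.
have disagree u v : prefers a u v -> prefers c u v -> False.
  move=> auv cuv; have : (u, v) \in set0 by rewrite -agree_set0 inE /= auv cuv.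
  by rewrite inE.
have neq_a : a x != a y :> nat by rewrite val_eqE (inj_eq perm_inj).
have neq_c : c x != c y :> nat by rewrite val_eqE (inj_eq perm_inj).
rewrite /prefers.
case: ltngtP neq_a => // axy _; case: ltngtP neq_c => // cxy _; exfalso.
- exact: (disagree x y).
- exact: (disagree y x).
Qed.

Lemma agree0_inj a b c : agree a c = 0%N -> agree b c = 0%N -> a = b.
Proof.
move=> ac0 bc0; apply/permP=> x; apply: val_inj.
rewrite -!card_prefers_above; apply: eq_card => y; rewrite !inE.
have [->|neq_yx] := eqVneq y x; first by rewrite /prefers !ltnn.
by rewrite (agree0_prefersE ac0 neq_yx) (agree0_prefersE bc0 neq_yx).
Qed.

Definition rev_ranking a : ranking m :=
  perm (fun x y (e : rev_ord (a x) = rev_ord (a y)) => perm_inj (rev_ord_inj e)).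

Lemma agree_rev_ranking a : agree a (rev_ranking a) = 0%N.
Proof.
apply/eqP; rewrite cards_eq0; apply/eqP/setP=> [[x y]].
rewrite !inE /prefers /= !permE /=; apply/negbTE/negP => /andP[].
by have := ltn_ord (a x); have := ltn_ord (a y); lia.
Qed.

End Rankings.

Local Open Scope ring_scope.

Section ChamberlinCourant.

Variables (R : realType) (m : nat) (P : {ffun ranking m -> R}).
Hypothesis P_profile : is_profile P.

Lemma cc_score_agree0 r t : agree r t = 0%N -> cc_score P t = 1 - P r.
Proof.
move=> rt0; case: P_profile => _ sumP1.
rewrite /cc_score -sumP1 (bigD1 r) //= [in RHS](bigD1 r) //= addrAC subrr add0r.
rewrite rt0 /s_CC eqxx mulr0 add0r; apply: eq_bigr => r' neq_r'r.
by case: eqP => [r't0|]; [case/eqP: neq_r'r; apply: agree0_inj r't0 rt0|rewrite mulr1].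
Qed.

Lemma cc_chosen_agree0_min r t :
  cc_chosen P t -> agree r t = 0%N -> forall r', P r <= P r'.
Proof.
move=> t_chosen rt0 r'; have := t_chosen (rev_ranking r').
by rewrite (cc_score_agree0 (agree_rev_ranking r')) (cc_score_agree0 rt0) lerD2l lerN2.
Qed.

Lemma min_weight_mul_fact_le r : (forall r', P r <= P r') -> m`!%:R * P r <= 1.
Proof.
move=> P_min; rewrite mulr_natl -card_Sn -sumr_const.
case: P_profile => _ <-; exact: ler_sum.
Qed.

End ChamberlinCourant.

Lemma bin2_lt_fact m : (2 <= m)%N -> ('C(m, 2) < m`!)%N.
Proof.
move=> le2m; have C_gt0 : (0 < 'C(m, 2))%N by rewrite bin_gt0.
apply: (@leq_trans ('C(m, 2) * 2)); first by rewrite -[X in (X < _)%N]muln1 ltn_pmul2l.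
by rewrite (bin_ffact m 2) -(ffact_fact le2m) leq_pmulr // fact_gt0.
Qed.

Theorem mainTheorem2 (R : realType) (m : nat) (P : {ffun ranking m -> R})
  (t : ranking m) :
  (2 <= m)%N -> is_profile P -> cc_chosen P t -> uJR P t.
Proof.
move=> le2m P_profile t_chosen r P_r_ge; rewrite lt0n; apply/negP => /eqP rt0.
have P_min := cc_chosen_agree0_min P_profile t_chosen rt0.
have := min_weight_mul_fact_le P_profile P_min; apply/negP; rewrite -ltNge.
have C_gt0 : 0 < 'C(m, 2)%:R :> R by rewrite ltr0n bin_gt0.
apply: (@lt_le_trans _ _ (m`!%:R * 'C(m, 2)%:R^-1)).
  by rewrite ltr_pdivlMr // mul1r ltr_nat bin2_lt_fact.
by apply: ler_wpM2l; rewrite ?ler0n.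
Qed.
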